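(* Let $\beta$ be any online throttling strategy (specified for every horizon $T$). For any $\mu>\rho/\bar v$, \[\liminf_{T\to\infty,\ B=\rho T}\ \inf_{\bm v,\,G}\ \frac1T\,\mathbb E_{\bm p\sim G^T,\ \bm\gamma}\Big[R^\beta(\bm v,\bm p,\bm\gamma)-\mu\cdot R^{\mathrm{H}}(\bm v,\bm p)\Big]<0,\] where the infimum is over value sequences $\bm v\in[0,\bar v]^T$ and distributions $G$ on $[0,\bar v]$.
   Context: Repeated second-price auctions with a single budget-constrained buyer. Constants $\bar v>0$ and $\rho\in(0,\bar v]$. There are $T$ rounds and total budget $B=\rho T$. In round $t$ the buyer has value $v_t\in[0,\bar v]$ (here an arbitrary, adversarially chosen sequence $\bm v=(v_t)$), and the highest competing bid $p_t$ is drawn i.i.d. from a distribution $G$ on $[0,\bar v]$ unknown to the buyer. After seeing $v_t$ the buyer chooses $x_t\in\{0,1\}$ and obtains revenue $x_tr_t$ and pays $x_tc_t$, with $r_t=(v_t-p_t)^+$, $c_t=p_t\mathbf 1[v_t\ge p_t]$. An online throttling strategy sets $x_t=\beta_t(\mathcal H_t,v_t,\gamma_t)$ with internal randomness $\gamma_t$ and history $\mathcal H_t=(v_\tau,x_\tau,p_\tau)_{\tau<t}$ (full information) or $(v_\tau,x_\tau,x_\tau p_\tau)_{\tau<t}$ (partial information); total payment must stay within $B$. With $T_0$ the last round with $x_t=1$, the total revenue is $R^\beta(\bm v,\bm p,\bm\gamma)=\sum_{t=1}^{T_0}x_tr_t$. The hindsight benchmark is $R^{\mathrm H}(\bm v,\bm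 p)=\max_{\bm x\in\{0,1\}^T}\sum_{t=1}^Tx_t(v_t-p_t)^+$ subject to $\sum_{t=1}^Tx_tp_t\mathbf 1[v_t\ge p_t]\le T\rho$. *)

From HB Require Import structures.
From mathcomp Require Import all_boot all_order all_algebra.
From mathcomp Require Import all_classical all_reals all_analysis.
Set Implicit Arguments. Unset Strict Implicit. Unset Printing Implicit Defensive.
Import Order.TTheory GRing.Theory Num.Theory.
Local Open Scope ring_scope.

Section Throttling.
Variable R : realType.

(* A history entry (v_tau, x_tau, p_tau): full-information feedback. *)
Definition hist_entry := (R * bool * R)%type.

(* Per-horizon strategy: [beta t H v w] = x_t, the decision in round t
   (rounds indexed 0,...,T-1), given the history H_t (rounds < t), the
   current value v_t and the internal randomness w (which encodes the whole
   random sequence gamma). *)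
Definition strategy (Omega : Type) := nat -> seq hist_entry -> R -> Omega -> bool.

Variable Omega : Type.

Fixpoint history (b : strategy Omega) (v p : nat -> R) (w : Omega) (t : nat)
  : seq hist_entry :=
  match t with
  | 0 => [::]
  | t'.+1 => let H := history b v p w t' in
             rcons H (v t', b t' H (v t') w, p t')
  end.

Definition decision (b : strategy Omega) (v p : nat -> R) (w : Omega) (t : nat)
  : bool := b t (history b v p w t) (v t) w.

Definition rev_t (v p : nat -> R) (t : nat) : R := Num.max (v t - p t) 0.
Definition cost_t (v p : nat -> R) (t : nat) : R :=
  if p t <= v t then p t else 0.

Definition payment (T : nat) (b : strategy Omega) (v p : nat -> R) (w : Omega) : R :=
  \sum_(t < T) (decision b v p w t)%:R * cost_t v p t.

(* total revenue R^beta.  Since x_t = 0 after the last round T_0 with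
   x_t = 1, the sum up to T_0 equals the sum over all T rounds. *)
Definition revenue (T : nat) (b : strategy Omega) (v p : nat -> R) (w : Omega) : R :=
  \sum_(t < T) (decision b v p w t)%:R * rev_t v p t.

Definition hindsight (T : nat) (rho : R) (v p : nat -> R) : R :=
  \big[Num.max/0]_(x : {ffun 'I_T -> bool}
        | \sum_(t < T) (x t)%:R * cost_t v p t <= T%:R * rho)
     \sum_(t < T) (x t)%:R * rev_t v p t.

End Throttling.

Local Open Scope ereal_scope.

(* Expectation over p ~ G^T (i.i.d. coordinates p_0,...,p_{T-1}), written as
   an iterated integral (equal to the product-measure integral by Fubini). *)
Fixpoint expectG (R : realType) (G : probability R R) (n : nat)
    (f : (nat -> R) -> \bar R) : \bar R :=
  match n with
  | 0 => f (fun _ => 0%R)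
  | n'.+1 => \int[G]_x expectG G n' (fun p => f (fun t => if t == n' then x else p t))
  end.

Definition gap_expectation (R : realType) (d : measure_display)
    (Omega : measurableType d) (P : probability Omega R)
    (T : nat) (b : strategy R Omega) (rho mu : R) (v : nat -> R)
    (G : probability R R) : \bar R :=
  \int[P]_w expectG G T
     (fun p => (revenue T b v p w - mu * hindsight T rho v p)%R%:E).

From HB Require Import structures.
From mathcomp Require Import all_boot all_order all_algebra.
From mathcomp Require Import all_classical all_reals all_analysis.
From mathcomp Require Import lra zify ring.
Import Order.TTheory GRing.Theory Num.Theory.
Local Open Scope ring_scope.
Local Open Scope classical_set_scope.

(* The adversary posts the deterministic price p0, with rho/mu < p0 < vbar, so
   every win costs p0 and the budget allows at most T rho / p0 wins.  The T = n L
   rounds form n phases of length L; in instance j the surplus of a win in phase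
   k is a M^k for k <= j and 0 afterwards.  Instance j and instance n-1 coincide
   up to the end of phase j, so the strategy plays the same there, while the
   benchmark of instance j buys all of phase j and earns L a M^j.  Weighting
   instance j by M^-j, a win in phase k weighs at most 1 + n/M in total, so the
   weighted sum of the gaps is at most ((1 + n/M) rho/p0 - mu) T < 0 for every
   realisation of the internal randomness; hence some instance has expected gap
   at most -c T with c > 0 independent of T. *)

Section StrategyMeasurability.
Variables (R : realType) (d : measure_display) (Omega : measurableType d).
Variable b : strategy R Omega.

Lemma history_eq_prefix (v v' p : nat -> R) w t :
  (forall s, (s < t)%N -> v s = v' s) ->
  history b v p w t = history b v' p w t.
Proof.
elim: t => [//|t IH] vv' /=.
by rewrite IH ?vv' // => s /ltnW; exact: vv'.
Qed.

Lemma decision_eq_prefix (v v' p : nat -> R) w t :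
  (forall s, (s <= t)%N -> v s = v' s) ->
  decision b v p w t = decision b v' p w t.
Proof.
move=> vv'; rewrite /decision (@history_eq_prefix v v') ?vv' //.
by move=> s /ltnW; exact: vv'.
Qed.

Lemma history_finite (v p : nat -> R) t :
  exists Hs : seq (seq (hist_entry R)), forall w, history b v p w t \in Hs.
Proof.
elim: t => [|t [Hs HsP]]; first by exists [:: [::]].
exists (flatten [seq [:: rcons H (v t, true, p t); rcons H (v t, false, p t)]
                | H <- Hs]).
move=> w /=; apply/flattenP.
exists [:: rcons (history b v p w t) (v t, true, p t);
           rcons (history b v p w t) (v t, false, p t)].
  by apply/mapP; exists (history b v p w t).
by case: (b t _ _ w); rewrite !inE eqxx ?orbT.
Qed.

Hypothesis mb : forall t H x, measurable_fun [set: Omega] (b t H x).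

Lemma measurable_strategy_eq t H x (c : bool) :
  measurable [set w | b t H x w = c].
Proof.
have mc : measurable [set c] by [].
by have := mb t H x measurableT _ mc; rewrite setTI.
Qed.

Lemma measurable_history_eq (v p : nat -> R) t Hs :
  measurable [set w | history b v p w t = Hs].
Proof.
elim: t Hs => [|t IH] Hs /=.
  case: Hs => [|e Hs].
    by rewrite (_ : [set _ | _] = setT) //; apply/seteqP; split.
  by rewrite (_ : [set _ | _] = set0) //; apply/seteqP; split.
case/lastP: Hs => [|Hs [[x c] y]].
  by rewrite (_ : [set _ | _] = set0) //; apply/seteqP; split=> // w /=;
    case: (history b v p w t).
have [/andP[/eqP-> /eqP->]|xy] := boolP ((x == v t) && (y == p t)).
  rewrite (_ : [set _ | _] = [set w | history b v p w t = Hs] `&`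
                             [set w | b t Hs (v t) w = c]).
    exact: measurableI (IH Hs) (measurable_strategy_eq _ _ _ _).
  apply/seteqP; split=> w /=; first by move/rcons_inj => [-> ->].
  by case=> -> ->.
rewrite (_ : [set _ | _] = set0) //; apply/seteqP; split=> // w /=.
by move/rcons_inj => [_ vx _ py]; move: xy; rewrite vx py !eqxx.
Qed.

Lemma measurable_decision (v p : nat -> R) t :
  measurable [set w | decision b v p w t].
Proof.
have [Hs HsP] := history_finite v p t.
rewrite (_ : [set _ | _] = \big[setU/set0]_(H <- Hs)
    ([set w | history b v p w t = H] `&` [set w | b t H (v t) w = true])).
  apply: bigsetU_measurable => H _.
  exact: measurableI (measurable_history_eq _ _ _ _) (measurable_strategy_eq _ _ _ _).
apply/seteqP; split=> w /=; rewrite -bigcup_seq.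
  by move=> dw; exists (history b v p w t); [exact: HsP | split].
by case=> H /= _ [<-].
Qed.

Lemma measurable_revenue T (v p : nat -> R) :
  measurable_fun [set: Omega] (revenue T b v p).
Proof.
apply: measurable_sum => t; apply: measurable_realfun.measurable_funM => //.
rewrite (_ : (fun w => _) = \1_[set w | decision b v p w t]).
  exact: measurable_realfun.measurable_indic (measurable_decision v p t).
by apply/funext => w; rewrite indicE mem_setE.
Qed.

Lemma integrable_revenueB (P : probability Omega R) T (v p : nat -> R) (c : R) :
  P.-integrable [set: Omega] (fun w => (revenue T b v p w - c)%:E).
Proof.
apply: (@measurable_bounded_integrable _ _ _ P
          (fun w => revenue T b v p w - c)) => //.
- by have /= -> := probability_setT P; rewrite ltry.
- exact: measurable_realfun.measurable_funB (measurable_revenue T v p) _.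
exists (\sum_(t < T) `|rev_t v p t| + `|c|); split; first exact: num_real.
move=> K /ltW + w _ /=; apply: le_trans.
apply: le_trans (ler_normB _ _) _; rewrite lerD2r.
apply: le_trans (ler_norm_sum _ _ _) _; apply: ler_sum => t _.
by rewrite normrM ler_piMl //; case: decision; rewrite ?normr1 ?normr0.
Qed.

End StrategyMeasurability.

Section DiracExpectation.
Local Open Scope ereal_scope.
Import HBNNSimple.
Context {R : realType}.

(* Unlike [integral_dirac], no measurability is assumed: the integrands of
   [expectG] are not known to be measurable. *)
Lemma integral_dirac_ge0_EFin (a : R) (g : R -> R) : (forall x, 0 <= g x)%R ->
  \int[(\d_a : probability R R)]_x (g x)%:E = (g a)%:E.
Proof.
move=> g_ge0; rewrite ge0_integralTE; last by move=> x; rewrite lee_fin.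
apply/eqP; rewrite eq_le; apply/andP; split.
  apply: ge_ereal_sup => _ [h hg <-].
  have := integral_nnsfun (\d_a : probability R R) measurableT h.
  rewrite patch_setT => <-; rewrite integral_dirac //; first by rewrite diracT mul1e.
  by apply/measurable_realfun.measurable_EFinP; exact: measurable_funPT.
apply: ereal_sup_ubound.
exists (scale_nnsfun (indic_nnsfun R (measurable_set1 a)) (g_ge0 a)).
  move=> x /=; rewrite measurable_realfun.mindicE lee_fin.
  by have [/set_mem ->|_] := boolP (x \in [set a]); rewrite ?mulr1 ?mulr0.
by rewrite /= sintegralrM sintegral_indic /= diracE mem_set // mule1.
Qed.

Lemma integral_dirac_EFin (a : R) (g : R -> R) :
  \int[(\d_a : probability R R)]_x (g x)%:E = (g a)%:E.
Proof.
rewrite integralE.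
have -> : (EFin \o g)^\+ = fun x => (Num.max (g x) 0)%:E.
  by apply/funext => x; rewrite funeposE /= EFin_max.
have -> : (EFin \o g)^\- = fun x => (Num.max (- g x) 0)%:E.
  by apply/funext => x; rewrite funenegE /= EFin_max.
rewrite !integral_dirac_ge0_EFin; try by move=> x; rewrite le_max lexx orbT.
by rewrite -EFinB !maxEle; do 2 case: leP => ?; congr EFin; lra.
Qed.

Lemma expectG_dirac (a : R) n (F : (nat -> R) -> R) :
  expectG (\d_a : probability R R) n (fun p => (F p)%:E) =
  (F (fun t => if (t < n)%N then a else 0%R))%:E.
Proof.
elim: n F => [|n IH] F /=; first by congr (EFin (F _)); apply/funext.
under eq_integral do rewrite IH.
rewrite integral_dirac_EFin; congr (EFin (F _)); apply/funext => t.
by rewrite ltnS; case: ltngtP => // ->; rewrite eqxx.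
Qed.

End DiracExpectation.

Lemma exists_weighted_integral_le {R : realType} {d : measure_display}
    {Omega : measurableType d} {P : probability Omega R} {n : nat}
    {g : nat -> Omega -> R} {c : nat -> R} {K : R} :
  (0 < n)%N -> (forall j, P.-integrable [set: Omega] (fun w => (g j w)%:E)) ->
  (forall w, \sum_(j < n) g j w * c j <= K) ->
  exists2 j, (j < n)%N & fine (\int[P]_w (g j w)%:E) * c j <= K / n%:R.
Proof.
move=> n_gt0 gint gK.
pose E j := fine (\int[P]_w (g j w)%:E).
have EE j : (\int[P]_w (g j w)%:E)%E = (E j)%:E.
  by rewrite fineK // integrable_fin_num.
have cgint j : P.-integrable [set: Omega] (fun w => ((c j)%:E * (g j w)%:E)%E).
  exact: integrableZl.
have EK : \sum_(j < n) E j * c j <= K.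
  rewrite -lee_fin -sumEFin.
  have -> : (\sum_(j < n) (E j * c j)%:E =
             \sum_(j < n) \int[P]_w ((c j)%:E * (g j w)%:E))%E.
    by apply: eq_bigr => j _; rewrite integralZl // EE -EFinM mulrC.
  rewrite -(integral_sum measurableT (fun j : 'I_n => cgint j)).
  apply: (@le_trans _ _ (\int[P]_w K%:E)%E); last first.
    by rewrite integral_cst //= probability_setT mule1.
  apply: le_integral => //.
  - exact: integrable_sum.
  - exact: finite_measure_integrable_cst.
  move=> w _; rewrite sumEFin lee_fin (le_trans _ (gK w)) //.
  by apply: ler_sum => j _; rewrite mulrC.
have [//|none] := pselect (exists2 j, (j < n)%N & E j * c j <= K / n%:R).
have : \sum_(j < n) K / n%:R < \sum_(j < n) E j * c j.
  apply: ltr_sum => [|j _]; first by apply/hasP; exists (Ordinal n_gt0).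
  by rewrite ltNge; apply/negP => jK; apply: none; exists j.
rewrite sumr_const card_ord -[K / n%:R *+ n]mulr_natr divfK ?pnatr_eq0 -?lt0n //.
by rewrite ltNge EK.
Qed.

Lemma limn_einf_le_infinitely_often {R : realType} {u : (\bar R)^nat} (x : \bar R) :
  (forall N, exists2 T, (N <= T)%N & (u T <= x)%E) -> (limn_einf u <= x)%E.
Proof.
move=> ux; rewrite limn_einf_lim; apply: lime_le; first exact: is_cvg_einfs.
apply: nearW => N; have [T NT uT] := ux N.
by apply: le_trans uT; apply: ereal_inf_lbound; exists T.
Qed.

Definition gain {R : realType} (a M : R) (k : nat) : R := a * M ^+ k.

Definition ladder {R : realType} (L : nat) (p0 a M : R) (j t : nat) : R :=
  if (t %/ L <= j)%N then p0 + gain a M (t %/ L) else 0.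

Definition const_prices {R : realType} (p0 : R) (T t : nat) : R :=
  if (t < T)%N then p0 else 0.

Lemma const_prices_bounded {R : realType} {p0 vbar : R} T t :
  0 <= p0 <= vbar -> 0 <= const_prices p0 T t <= vbar.
Proof.
case/andP=> p0_ge0 p0_le; rewrite /const_prices.
by case: ifP => _; rewrite ?p0_ge0 ?p0_le ?lexx ?(le_trans p0_ge0 p0_le).
Qed.

Section LadderInstance.
Context {R : realType} {n L : nat} {p0 a M : R}.
Hypotheses (n_gt0 : (0 < n)%N) (L_gt0 : (0 < L)%N).
(* [lra] does not use section hypotheses, hence the [have := p0_gt0] below. *)
Hypotheses (p0_gt0 : 0 < p0) (a_gt0 : 0 < a) (M_ge1 : 1 <= M).

Local Notation gain := (gain a M).
Local Notation ladder := (ladder L p0 a M).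
Local Notation T := (n * L)%N.
Local Notation prices := (const_prices p0 T).

Lemma gain_gt0 k : 0 < gain k.
Proof. by rewrite mulr_gt0 // exprn_gt0 // (lt_le_trans ltr01). Qed.

Lemma gain_le {k k'} : (k <= k')%N -> gain k <= gain k'.
Proof. by move=> kk'; apply: ler_wpM2l; [exact: ltW | exact: ler_weXn2l]. Qed.

Lemma a_le_gain k : a <= gain k.
Proof. by have := gain_le (leq0n k); rewrite /gain expr0 mulr1. Qed.

Lemma phase_lt {t} : (t < T)%N -> (t %/ L < n)%N.
Proof. by move=> tT; rewrite ltn_divLR. Qed.

Lemma ladder_bounded (vbar : R) j t : (j < n)%N -> gain n.-1 <= vbar - p0 ->
  0 <= ladder j t <= vbar.
Proof.
move=> jn top; have := p0_gt0; have : 0 < gain n.-1 := gain_gt0 _.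
rewrite /ladder; case: ifP => tj; last by rewrite lexx /=; lra.
have : 0 < gain (t %/ L) := gain_gt0 _.
have : gain (t %/ L) <= gain n.-1 by apply: gain_le; lia.
by move=> *; apply/andP; split; lra.
Qed.

Lemma rev_ladder j t : (t < T)%N ->
  rev_t (ladder j) prices t = if (t %/ L <= j)%N then gain (t %/ L) else 0.
Proof.
move=> tT; rewrite /rev_t /ladder /const_prices tT.
have := p0_gt0; have := gain_gt0 (t %/ L).
by case: ifP => _ *; rewrite maxEle; case: leP; lra.
Qed.

Lemma cost_ladder j t : (t < T)%N -> (t %/ L <= j)%N ->
  cost_t (ladder j) prices t = p0.
Proof.
move=> tT tj; rewrite /cost_t /ladder /const_prices tT tj.
have := p0_gt0; have := gain_gt0 (t %/ L).
by case: ifP => // /negbT; rewrite -ltNge; lra.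
Qed.

Lemma card_phase {j} : (j < n)%N -> \sum_(t < T) ((t %/ L == j)%N%:R : R) = L%:R.
Proof.
move=> jn; rewrite -(big_mkord xpredT (fun t => ((t %/ L == j)%N%:R : R))).
rewrite (@big_cat_nat _ _ _ (j * L)) //=; last by nia.
rewrite (@big_cat_nat _ _ _ (j * L + L) (j * L)) ?leq_addr //=; last by nia.
rewrite big_nat_cond big1 ?add0r => [|t /andP[/andP[_ tj] _]]; last first.
  by rewrite ltn_eqF // ltn_divLR.
rewrite [X in _ + X]big_nat_cond [X in _ + X]big1 ?addr0 => [|t /andP[/andP[tj _] _]];
  last by rewrite gtn_eqF // leq_divRL //; nia.
rewrite (eq_big_nat _ _ (F2 := fun _ => 1)) => [|t /andP[t1 t2]].
  by rewrite sumr_const_nat; congr (_%:R); lia.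
suff -> : (t %/ L == j)%N by [].
by rewrite eqn_leq -ltnS ltn_divLR // leq_divRL //; apply/andP; split; nia.
Qed.

Lemma hindsight_ladder_ge (rho : R) j : (j < n)%N -> p0 <= n%:R * rho ->
  L%:R * gain j <= hindsight T rho (ladder j) prices.
Proof.
move=> jn p0_le; have budget : L%:R * p0 <= T%:R * rho.
  by rewrite natrM mulrAC [X in _ <= X]mulrC; apply: ler_wpM2l.
pose x := [ffun t : 'I_T => (t %/ L == j)%N].
have phase_sum (F : nat -> R) c : (forall t, (t < T)%N -> (t %/ L)%N = j -> F t = c) ->
    \sum_(t < T) (x t)%:R * F t = L%:R * c.
  move=> Fc; rewrite -(card_phase jn) mulr_suml; apply: eq_bigr => t _.
  by rewrite ffunE; case: eqP => [/(Fc _ (ltn_ord t))->|]; rewrite ?mul1r ?mul0r.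
rewrite -(phase_sum (rev_t (ladder j) prices)) => [|t tT tj]; last first.
  by rewrite rev_ladder // tj leqnn.
apply: le_bigmax_cond; rewrite (phase_sum _ p0) // => t tT tj.
by rewrite cost_ladder // tj.
Qed.

Lemma weighted_gain_sum_le k : (k < n)%N ->
  \sum_(j < n) (if (k <= j)%N then gain k else 0) / gain j <= 1 + n%:R / M.
Proof.
move=> kn; have M_gt0 : 0 < M := lt_le_trans ltr01 M_ge1.
apply: (@le_trans _ _ (\sum_(j < n) (((j : nat) == k)%:R + M^-1))).
  apply: ler_sum => j _; case: ltngtP => kj.
  - rewrite add0r ler_pdivrMr ?gain_gt0 // mulrC ler_pdivlMr //.
    by rewrite /gain -mulrA -exprSr gain_le.
  - by rewrite mul0r add0r invr_ge0 ltW.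
  - by rewrite kj divff ?gt_eqF ?gain_gt0 // lerDl invr_ge0 ltW.
rewrite big_split /= sumr_const card_ord (bigD1 (Ordinal kn)) //= eqxx.
rewrite big1 ?addr0 => [|j /negbTE jk]; last by rewrite -val_eqE /= in jk; rewrite jk.
by rewrite -[M^-1 *+ n]mulr_natl mulrC.
Qed.

Section Strategy.
Context {d : measure_display} {Omega : measurableType d} {b : strategy R Omega}.

Local Notation wins w t := ((decision b (ladder n.-1) prices w t)%:R : R).

Lemma revenue_ladder j w : (j < n)%N ->
  revenue T b (ladder j) prices w =
  \sum_(t < T) wins w t * (if (t %/ L <= j)%N then gain (t %/ L) else 0).
Proof.
move=> jn; apply: eq_bigr => t _; rewrite rev_ladder //.
case: ifP => tj; last by rewrite !mulr0.
congr (_%:R * _); congr nat_of_bool; apply: decision_eq_prefix => s st; rewrite /ladder.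
have sj : (s %/ L <= j)%N := leq_trans (leq_div2r L st) tj.
by rewrite sj (_ : (s %/ L <= n.-1)%N) //; lia.
Qed.

Lemma payment_ladder w :
  payment T b (ladder n.-1) prices w = p0 * \sum_(t < T) wins w t.
Proof.
rewrite mulr_sumr; apply: eq_bigr => t _; rewrite cost_ladder 1?mulrC //.
by have := phase_lt (ltn_ord t); lia.
Qed.

Lemma weighted_gap_le {rho mu : R} w : 0 <= mu -> p0 <= n%:R * rho ->
  payment T b (ladder n.-1) prices w <= T%:R * rho ->
  \sum_(j < n) (revenue T b (ladder j) prices w
                - mu * hindsight T rho (ladder j) prices) / gain j
  <= T%:R * ((1 + n%:R / M) * rho / p0 - mu).
Proof.
move=> mu_ge0 p0_le pay_le.
have wins_le : \sum_(t < T) wins w t <= T%:R * rho / p0.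
  by rewrite ler_pdivlMr // mulrC -payment_ladder.
have revenue_le : \sum_(j < n) revenue T b (ladder j) prices w / gain j
    <= (1 + n%:R / M) * (T%:R * rho / p0).
  apply: le_trans (ler_wpM2l _ wins_le); last first.
    by rewrite addr_ge0 // divr_ge0 // ltW // (lt_le_trans ltr01).
  rewrite mulr_sumr.
  under eq_bigr => j _ do rewrite (revenue_ladder _ _ (ltn_ord j)) mulr_suml.
  rewrite exchange_big /=; apply: ler_sum => t _.
  under eq_bigr => j _ do rewrite -mulrA.
  rewrite -mulr_sumr mulrC; apply: ler_wpM2r; first by case: decision.
  exact: weighted_gain_sum_le (phase_lt (ltn_ord t)).
apply: (@le_trans _ _ (\sum_(j < n)
    (revenue T b (ladder j) prices w / gain j - mu * L%:R))).
  apply: ler_sum => j _; rewrite mulrBl lerD2l lerN2 -mulrA ler_wpM2l //.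
  by rewrite ler_pdivlMr ?gain_gt0 // hindsight_ladder_ge.
rewrite sumrB sumr_const card_ord.
have -> : mu * L%:R *+ n = mu * T%:R by rewrite -mulr_natr natrM; ring.
have -> : T%:R * ((1 + n%:R / M) * rho / p0 - mu) =
          (1 + n%:R / M) * (T%:R * rho / p0) - mu * T%:R by ring.
by rewrite lerD2r.
Qed.

Lemma ladder_gap_expectation_le {rho mu : R} (P : probability Omega R) :
  (forall t H x, measurable_fun [set: Omega] (b t H x)) ->
  0 <= mu -> p0 <= n%:R * rho -> (1 + n%:R / M) * rho / p0 <= mu ->
  (forall w, payment T b (ladder n.-1) prices w <= T%:R * rho) ->
  exists2 j, (j < n)%N &
    ((T%:R^-1)%:E * gap_expectation P T b rho mu (ladder j)
                      (\d_p0 : probability R R)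
     <= (a * ((1 + n%:R / M) * rho / p0 - mu) / n%:R)%:E)%E.
Proof.
move=> mb mu_ge0 p0_le ratio pay_le.
set k := (1 + n%:R / M) * rho / p0 - mu.
pose gap j w := revenue T b (ladder j) prices w - mu * hindsight T rho (ladder j) prices.
have gap_int j : P.-integrable [set: Omega] (fun w => (gap j w)%:E).
  exact: integrable_revenueB.
have [j jn Egap] := exists_weighted_integral_le (c := fun j => (gain j)^-1) n_gt0 gap_int
  (fun w => weighted_gap_le w mu_ge0 p0_le (pay_le w)).
exists j => //.
have -> : (gap_expectation P T b rho mu (ladder j) (\d_p0 : probability R R) =
           \int[P]_w (gap j w)%:E)%E.
  apply: eq_integral => w _; exact: (expectG_dirac p0 T (fun p =>
    revenue T b (ladder j) p w - mu * hindsight T rho (ladder j) p)).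
rewrite -(fineK (integrable_fin_num _ (gap_int j))) // -EFinM lee_fin.
move: Egap; set E := fine _; rewrite ler_pdivrMr ?gain_gt0 // => Egap.
have T_gt0 : 0 < T%:R :> R by rewrite ltr0n muln_gt0 n_gt0.
have Tk_le0 : T%:R * k / n%:R <= 0.
  apply: mulr_le0_ge0; last by rewrite invr_ge0 ler0n.
  by apply: mulr_ge0_le0; [exact: ler0n | rewrite subr_le0].
rewrite mulrC ler_pdivrMr //; apply: le_trans Egap _.
rewrite (_ : _ * T%:R = T%:R * k / n%:R * a); last by ring.
exact: ler_wnM2l Tk_le0 _ _ (a_le_gain j).
Qed.

End Strategy.
End LadderInstance.

Lemma ladder_parameters {R : realType} {vbar rho mu : R} :
  0 < vbar -> 0 < rho -> rho / vbar < mu ->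
  exists p0 n M, [/\ 0 < p0 < vbar, (0 < n)%N, p0 <= n%:R * rho, 1 <= M
                   & (1 + n%:R / M) * rho / p0 < mu].
Proof.
move=> vbar_gt0 rho_gt0; rewrite ltr_pdivrMr // => rho_lt.
have mu_gt0 : 0 < mu by rewrite -(pmulr_lgt0 _ vbar_gt0) (lt_trans rho_gt0).
pose p0 := (vbar + rho / mu) / 2.
have rho_mu : rho / mu < vbar by rewrite ltr_pdivrMr // mulrC.
have rho_mu_gt0 : 0 < rho / mu by rewrite divr_gt0.
have p0_gt0 : 0 < p0 by rewrite /p0; lra.
have surplus : 0 < mu * p0 - rho.
  by rewrite subr_gt0 mulrC -ltr_pdivrMr // /p0; lra.
pose n := (Num.truncn (p0 / rho)).+1.
pose M := n%:R * rho / (mu * p0 - rho) + 1.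
have M_ge1 : 1 <= M.
  by rewrite /M lerDr; apply: divr_ge0; [apply: mulr_ge0 | ]; rewrite ?ler0n ?ltW.
exists p0, n, M; split => //.
- by apply/andP; split => //; rewrite /p0; lra.
- by rewrite -ler_pdivrMr //; apply: ltW; exact: truncnS_gt.
rewrite ltr_pdivrMr // mulrDl mul1r -ltrBrDl mulrAC ltr_pdivrMr; last lra.
by rewrite /M mulrDr mulr1 mulrCA divff ?gt_eqF // mulr1 ltrDl.
Qed.

Theorem theorem2 (R : realType) (vbar rho : R)
  (hvbar : 0 < vbar) (hrho0 : 0 < rho) (hrho1 : rho <= vbar)
  (d : measure_display) (Omega : measurableType d)
  (P : nat -> probability Omega R)
  (beta : nat -> strategy R Omega)
  (* internal randomness: each decision is a measurable function of it *)
  (hmeas : forall T t H v, measurable_fun [set: Omega] (beta T t H v))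
  (* budget feasibility: total payment never exceeds B = rho T *)
  (hbudget : forall T (v p : nat -> R) w,
      (forall t, (t < T)%N -> 0 <= v t <= vbar) ->
      (forall t, (t < T)%N -> 0 <= p t <= vbar) ->
      payment T (beta T) v p w <= T%:R * rho)
  (mu : R) (hmu : rho / vbar < mu) :
  (limn_einf (fun T : nat =>
     ereal_inf [set e | exists (v : nat -> R) (G : probability R R),
        (forall t, (t < T)%N -> (0 <= v t <= vbar)%R) /\
        G [set x | (0 <= x <= vbar)%R] = 1%E /\
        e = ((T%:R)^-1)%R%:E * gap_expectation (P T) T (beta T) rho mu v G])
   < 0)%E.
Proof.
have [p0 [n [M [/andP[p0_gt0 p0_lt] n_gt0 p0_le M_ge1 ratio_lt]]]] :=
  ladder_parameters hvbar hrho0 hmu.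
have mu_ge0 : 0 <= mu by apply/ltW/(lt_trans _ hmu)/divr_gt0.
have Mn_gt0 : 0 < M ^+ n.-1 by rewrite exprn_gt0 // (lt_le_trans ltr01).
pose a := (vbar - p0) / M ^+ n.-1.
have a_gt0 : 0 < a by rewrite divr_gt0 ?subr_gt0.
have top : gain a M n.-1 <= vbar - p0 by rewrite /gain /a divfK ?gt_eqF.
pose k := (1 + n%:R / M) * rho / p0 - mu.
have last_lt : (n.-1 < n)%N by rewrite ltn_predL.
have p0_range : 0 <= p0 <= vbar by rewrite !ltW.
apply: le_lt_trans (limn_einf_le_infinitely_often (a * k / n%:R)%:E _) _.
  move=> N; pose L := N.+1; pose T := (n * L)%N.
  exists T; first by rewrite (leq_trans (leqnSn N)) // leq_pmull.
  have budget w : payment T (beta T) (ladder L p0 a M n.-1) (const_prices p0 T) w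
                  <= T%:R * rho.
    by apply: hbudget => t _; [exact: (ladder_bounded n_gt0) | exact: const_prices_bounded].
  have [j jn gap_le] := ladder_gap_expectation_le n_gt0 (ltn0Sn N) p0_gt0 a_gt0
    M_ge1 (P T) (hmeas T) mu_ge0 p0_le (ltW ratio_lt) budget.
  apply: le_trans gap_le; apply: ereal_inf_lbound.
  exists (ladder L p0 a M j), (\d_p0 : probability R R); split.
    by move=> t _; exact: (ladder_bounded n_gt0).
  by split=> //; rewrite /= diracE mem_set.
suff : a * k / n%:R < 0 by rewrite -lte_fin.
by rewrite pmulr_llt0 ?invr_gt0 ?ltr0n // pmulr_rlt0 // subr_lt0.
Qed.
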